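(* Let $n,s,t$ be integers with $n/2>s>t\ge 2$, and suppose that $(t-1)\,f(n/2,s,t)\ge s$. Then there is no graph on $n$ vertices in which every induced subgraph on $s$ vertices contains both a clique of size $t$ and an independent set of size $t$.
   Context: For integers $N>s>t$, $f(N,s,t)$ denotes the largest integer $f$ such that every graph on $N$ vertices in which every induced subgraph on $s$ vertices has an independent set of size at least $t$ must contain an independent set of size at least $f$. (Floors are ignored, so $n/2$ is treated as an integer.) *)

From mathcomp Require Import all_boot.
Set Implicit Arguments. Unset Strict Implicit. Unset Printing Implicit Defensive.

Section Graphs.
Variable T : finType.

Definition simple_graph (e : rel T) : bool :=
  [forall x, ~~ e x x] && [forall x, forall y, e x y == e y x].

Definition independent (e : rel T) (A : {set T}) : bool :=
  [forall x in A, forall y in A, ~~ e x y].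

Definition clique (e : rel T) (A : {set T}) : bool :=
  [forall x in A, forall y in A, (x != y) ==> e x y].

Definition has_indep_in (e : rel T) (S : {set T}) (k : nat) : bool :=
  [exists A : {set T}, [&& A \subset S, independent e A & k <= #|A|]].

Definition has_clique_in (e : rel T) (S : {set T}) (k : nat) : bool :=
  [exists A : {set T}, [&& A \subset S, clique e A & k <= #|A|]].

Definition every_s_has_indep (e : rel T) (s t : nat) : bool :=
  [forall S : {set T}, (#|S| == s) ==> has_indep_in e S t].

End Graphs.

Definition adj_of N (g : {ffun 'I_N * 'I_N -> bool}) : rel 'I_N :=
  fun x y => g (x, y).

Definition f_ok (N s t k : nat) : bool :=
  [forall g : {ffun 'I_N * 'I_N -> bool},
     (simple_graph (adj_of g) && every_s_has_indep (adj_of g) s t)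
       ==> has_indep_in (adj_of g) [set: 'I_N] k].

(* f(N,s,t) = the largest such k (always <= N, since the empty graph
   qualifies; so the search range 0..N+1 is exhaustive) *)
Definition f (N s t : nat) : nat := \max_(k < N.+2 | f_ok N s t k) k.

From mathcomp Require Import all_boot.
From mathcomp Require Import zify.

Set Implicit Arguments.
Unset Strict Implicit.
Unset Printing Implicit Defensive.

(* Transporting along a bijection 'I_(n/2) ~ U, every set U of n/2 vertices
   contains an independent set of size f(n/2, s, t).  Starting from W = set0,
   repeatedly add to W such an independent set chosen inside the complement of
   W, which still has at least n/2 vertices while |W| < s.  A clique meets each
   independent set in at most one vertex, so after t - 1 rounds W has at least
   min(s, (t-1) f(n/2, s, t)) = s vertices and no clique of size t; any s of
   them violate the hypothesis. *)

Section Cliques.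
Variable T : finType.
Implicit Types (e : rel T) (A B I S W : {set T}).

Lemma exists_subset_card A k : k <= #|A| -> exists2 B : {set T}, B \subset A & #|B| = k.
Proof.
elim: k => [|k IHk] le_kA; first by exists set0; rewrite ?sub0set ?cards0.
have [B sub_BA card_B] := IHk (ltnW le_kA).
have : 0 < #|A :\: B| by rewrite cardsD (setIidPr sub_BA) card_B subn_gt0.
case/card_gt0P => x; rewrite in_setD => /andP [xNB xA].
exists (x |: B); first by rewrite subUset sub1set xA.
by rewrite cardsU1 xNB card_B.
Qed.

Lemma cliqueP e A :
  reflect {in A &, forall x y, x != y -> e x y} (clique e A).
Proof.
apply: (iffP forall_inP) => [cl x y xA yA | cl x xA].
  by move: (cl x xA) => /forall_inP /(_ y yA) /implyP.
by apply/forall_inP => y yA; apply/implyP; apply: cl.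
Qed.

Lemma independentP e A :
  reflect {in A &, forall x y, ~~ e x y} (independent e A).
Proof.
apply: (iffP forall_inP) => [ind x y xA yA | ind x xA].
  by move: (ind x xA) => /forall_inP; apply.
by apply/forall_inP => y yA; apply: ind.
Qed.

Lemma cliqueS e A B : A \subset B -> clique e B -> clique e A.
Proof.
move=> /subsetP sub_AB /cliqueP clB; apply/cliqueP => x y xA yA.
exact: clB (sub_AB x xA) (sub_AB y yA).
Qed.

Lemma card_clique_independent_le1 e A I :
  clique e A -> independent e I -> #|A :&: I| <= 1.
Proof.
move=> /cliqueP clA /independentP indI; apply/card_le1_eqP => x y.
rewrite !inE => /andP [xA xI] /andP [yA yI].
apply/eqP/negPn/negP => xNy.
by move: (indI y x yI xI); rewrite (clA y x yA xA).
Qed.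

Lemma has_clique_inS e S W k :
  S \subset W -> has_clique_in e S k -> has_clique_in e W k.
Proof.
move=> sub_SW /existsP [A /and3P [sub_AS clA le_kA]].
by apply/existsP; exists A; rewrite clA le_kA (subset_trans sub_AS).
Qed.

Lemma has_clique_in_set0 e : ~~ has_clique_in e set0 1.
Proof.
apply/existsP => -[A /and3P [/subset_leq_card]].
by rewrite cards0 leqn0 => /eqP ->.
Qed.

Lemma has_clique_in_leq e S k m :
  k <= m -> has_clique_in e S m -> has_clique_in e S k.
Proof.
move=> le_km /existsP [A /and3P [sub_AS clA le_mA]].
by apply/existsP; exists A; rewrite sub_AS clA (leq_trans le_km).
Qed.

Lemma has_clique_inU_independent e W I j :
  ~~ has_clique_in e W j.+1 -> independent e I ->
  ~~ has_clique_in e (W :|: I) j.+2.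
Proof.
move=> freeW indI; apply/existsP => -[A /and3P [sub_A clA le_A]].
have splitA : A = (A :&: W) :|: (A :&: I) by rewrite -setIUr; apply/esym/setIidPl.
have le_AW : #|A :&: W| <= j.
  rewrite leqNgt; apply: contra freeW => gt_AW.
  by apply/existsP; exists (A :&: W); rewrite subsetIr gt_AW (cliqueS (subsetIl _ _)).
have le_AI := card_clique_independent_le1 clA indI.
by move: le_A; rewrite splitA cardsU; lia.
Qed.

End Cliques.

Section GreedyConstruction.
Variables (T : finType) (e : rel T) (m s F : nat).
Hypothesis card_T : s + m <= #|T|.
Hypothesis independent_in_m_sets : forall U : {set T}, #|U| = m ->
  exists2 I : {set T}, I \subset U & independent e I && (F <= #|I|).

Lemma greedy_clique_free j :
  exists2 W : {set T}, minn s (j * F) <= #|W| & ~~ has_clique_in e W j.+1.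
Proof.
elim: j => [|j [W le_W freeW]].
  by exists set0; rewrite ?mul0n ?minn0 ?has_clique_in_set0.
have [le_sW | lt_Ws] := leqP s #|W|.
  exists W; first by rewrite (leq_trans (geq_minl _ _)).
  by apply: contra freeW; apply: has_clique_in_leq.
have le_mWC : m <= #|~: W| by rewrite cardsCs setCK; move: card_T; lia.
have [U sub_UWC card_U] := exists_subset_card le_mWC.
have [I sub_IU /andP [indI le_FI]] := independent_in_m_sets card_U.
have disj_WI : W :&: I = set0.
  apply/setP => x; rewrite !inE; apply/andP => -[xW xI].
  by move: (subsetP sub_UWC x (subsetP sub_IU x xI)); rewrite inE xW.
exists (W :|: I); last exact: has_clique_inU_independent.
have := cardsUI W I; rewrite disj_WI cards0 addn0 => ->.
by move: le_W lt_Ws; rewrite mulSn; lia.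
Qed.

End GreedyConstruction.

Section Pullback.
Variables (T : finType) (N : nat) (h : 'I_N -> T) (e : rel T).

Definition pullback : {ffun 'I_N * 'I_N -> bool} := [ffun p => e (h p.1) (h p.2)].

Lemma adj_of_pullback x y : adj_of pullback x y = e (h x) (h y).
Proof. by rewrite /adj_of ffunE. Qed.

Lemma simple_graph_pullback : simple_graph e -> simple_graph (adj_of pullback).
Proof.
case/andP => /forallP irr_e /forallP sym_e.
apply/andP; split; apply/forallP => x; first by rewrite adj_of_pullback.
by apply/forallP => y; rewrite !adj_of_pullback; apply: (forallP (sym_e _)).
Qed.

Lemma independent_pullback A :
  independent (adj_of pullback) A = independent e (h @: A).
Proof.
apply/independentP/independentP => [ind _ _ /imsetP [x xA ->] /imsetP [y yA ->]
                                    | ind x y xA yA].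
  by rewrite -adj_of_pullback; apply: ind.
by rewrite adj_of_pullback; apply: ind; apply: imset_f.
Qed.

Hypothesis h_inj : injective h.

Lemma every_s_has_indep_pullback s t :
  (forall S : {set T}, #|S| = s -> has_indep_in e S t) ->
  every_s_has_indep (adj_of pullback) s t.
Proof.
move=> indep_s; apply/forallP => S; apply/implyP => /eqP card_S.
have /existsP [A /and3P [sub_A indA le_tA]] := indep_s _ (etrans (card_imset S h_inj) card_S).
have im_A : h @: (S :&: h @^-1: A) = A.
  apply/setP => x; apply/imsetP/idP => [[y] | xA]; first by rewrite !inE => /andP [_ ?] ->.
  have /imsetP [y yS eq_xy] := subsetP sub_A x xA.
  by exists y; rewrite // !inE yS -eq_xy.
apply/existsP; exists (S :&: h @^-1: A).
by rewrite subsetIl independent_pullback im_A indA -(card_imset _ h_inj) im_A.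
Qed.

End Pullback.

Lemma f_ok0 N s t : f_ok N s t 0.
Proof.
apply/forall_inP => g _; apply/existsP; exists set0.
by rewrite sub0set leq0n andbT; apply/forall_inP => x; rewrite in_set0.
Qed.

Lemma f_ok_f N s t : f_ok N s t (f N s t).
Proof.
have nonempty : 0 < #|[pred k : 'I_N.+2 | f_ok N s t k]|.
  by apply/card_gt0P; exists ord0; rewrite inE f_ok0.
rewrite /f; have [k ok_k ->] := eq_bigmax_cond (fun k : 'I_N.+2 => nat_of_ord k) nonempty.
by move: ok_k; rewrite inE.
Qed.

Lemma independent_of_size_f (T : finType) (e : rel T) N s t (U : {set T}) :
  simple_graph e -> (forall S : {set T}, #|S| = s -> has_indep_in e S t) ->
  #|U| = N -> exists2 I : {set T}, I \subset U & independent e I && (f N s t <= #|I|).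
Proof.
move=> simple_e indep_s card_U.
pose h (i : 'I_N) : T := enum_val (cast_ord (esym card_U) i).
have h_inj : injective h by move=> i j /enum_val_inj /cast_ord_inj.
have := forallP (f_ok_f N s t) (pullback h e).
rewrite simple_graph_pullback // every_s_has_indep_pullback //=.
case/existsP => B /and3P [_ indB le_fB].
exists (h @: B); first by apply/subsetP => _ /imsetP [i _ ->]; apply: enum_valP.
by rewrite -independent_pullback indB card_imset.
Qed.

Theorem mainTheorem6 (n s t : nat) :
  2 <= t -> t < s -> s < n./2 ->
  s <= (t - 1) * f n./2 s t ->
  forall (T : finType) (e : rel T),
    #|T| = n -> simple_graph e ->
    ~ (forall S : {set T}, #|S| = s ->
         has_clique_in e S t /\ has_indep_in e S t).
Proof.
move=> le_2t _ lt_s_half le_s_f T e card_T simple_e clique_and_indep.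
have indep_s (S : {set T}) : #|S| = s -> has_indep_in e S t by case/clique_and_indep.
have card_bound : s + n./2 <= #|T|.
  by have := odd_double_half n; rewrite card_T -addnn; lia.
have [W le_W freeW] := greedy_clique_free card_bound
  (fun U => independent_of_size_f simple_e indep_s) (t - 1).
have le_sW : s <= #|W| by move: le_W le_s_f; lia.
have [S sub_SW card_S] := exists_subset_card le_sW.
have [clique_S _] := clique_and_indep S card_S.
move: freeW; rewrite subn1 prednK ?(leq_trans _ le_2t) //.
by move/negP; apply; apply: has_clique_inS clique_S.
Qed.
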